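(* Let $A_S$ be an Artin group associated to a Coxeter matrix over a finite set $S$. Then $A_S$ is parabolic-retractable if and only if, for every $X\subseteq S$ and every $x\in X$, the subgroup $A_X$ admits a retraction onto $A_{X\setminus\{x\}}$.
   Context: A Coxeter matrix over a finite set $S$ is a matrix $M=(m_{s,t})_{s,t\in S}$ with entries in $\mathbb{N}\cup\{\infty\}$, $m_{s,s}=1$, and $m_{s,t}=m_{t,s}\ge 2$ for $s\neq t$. Write $\Pi(s,t,m)$ for the alternating word $sts\cdots$ of length $m$. The Artin group is $A_S=\langle S\mid \Pi(s,t,m_{s,t})=\Pi(t,s,m_{s,t})$ for $s\neq t$, $m_{s,t}\neq\infty\rangle$. For $X\subseteq S$, $A_X$ is the subgroup generated by $X$ ($A_\emptyset$ is trivial). A retraction of $G$ onto a subgroup $H$ is a homomorphism $\varphi:G\to H$ with $\varphi|_H=\mathrm{id}_H$. $A_S$ is parabolic-retractable if it admits a retraction onto $A_X$ for every $X\subseteq S$. *)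

(* Artin groups are encoded by words over signed generators
   modulo the congruence generated by free cancellation and the Artin relations. *)
From mathcomp Require Import all_boot.
Set Implicit Arguments. Unset Strict Implicit. Unset Printing Implicit Defensive.

Section Artin.
Variable S : finType.

(* Coxeter matrix: entries in nat ∪ {∞}; None encodes ∞. *)
Definition coxeter_matrix (M : S -> S -> option nat) : Prop :=
  (forall s, M s s = Some 1) /\
  (forall s t, M s t = M t s) /\
  (forall s t, s != t -> forall m, M s t = Some m -> 2 <= m).

(* A letter (s, b): s if b = false, s^-1 if b = true. *)
Definition letter := (S * bool)%type.
Definition word := seq letter.
Definition inv_letter (a : letter) : letter := (a.1, ~~ a.2).

Definition Pi (s t : S) (m : nat) : word :=
  mkseq (fun i => (if odd i then t else s, false)) m.

Variable M : S -> S -> option nat.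

Inductive art_eq : word -> word -> Prop :=
  | art_refl w : art_eq w w
  | art_sym u v : art_eq u v -> art_eq v u
  | art_trans u v w : art_eq u v -> art_eq v w -> art_eq u w
  | art_cancel u v a : art_eq (u ++ [:: a; inv_letter a] ++ v) (u ++ v)
  | art_rel u v s t m : s != t -> M s t = Some m ->
      art_eq (u ++ Pi s t m ++ v) (u ++ Pi t s m ++ v).

Definition in_parabolic (X : {set S}) (w : word) : Prop :=
  exists w', art_eq w w' /\ all (fun a : letter => a.1 \in X) w'.

(* A retraction of A_X onto A_Y: a group homomorphism A_X -> A_Y which is the
   identity on A_Y, represented by a function on representative words. *)
Definition retraction (X Y : {set S}) : Prop :=
  exists f : word -> word,
    [/\ (forall w1 w2, in_parabolic X w1 -> in_parabolic X w2 ->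
           art_eq w1 w2 -> art_eq (f w1) (f w2)),
        (forall w1 w2, in_parabolic X w1 -> in_parabolic X w2 ->
           art_eq (f (w1 ++ w2)) (f w1 ++ f w2)),
        (forall w, in_parabolic X w -> in_parabolic Y (f w)) &
        (forall w, in_parabolic Y w -> art_eq (f w) w)].

Definition parabolic_retractable : Prop :=
  forall X : {set S}, retraction [set: S] X.

End Artin.

(* Retractions between parabolic subgroups compose, and a retraction of A_Z
   onto A_Y restricts to one of A_Z' onto A_Y whenever Y ⊆ Z' ⊆ Z.  Hence a
   retraction A_S -> A_(X \ x) restricts to A_X -> A_(X \ x); conversely,
   removing the generators of S \ X one at a time and composing the one-step
   retractions yields a retraction A_S -> A_X. *)
From mathcomp Require Import all_boot.

Set Implicit Arguments. Unset Strict Implicit. Unset Printing Implicit Defensive.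

Section ParabolicRetractions.
Variable S : finType.
Variable M : S -> S -> option nat.

Lemma art_eq_ctx (p q u u' : word S) :
  art_eq M u u' -> art_eq M (p ++ u ++ q) (p ++ u' ++ q).
Proof.
elim=> {u u'} [w | u v _ IH | u v w _ IH1 _ IH2 | u v a | u v s t m st Mst].
- exact: art_refl.
- exact: art_sym.
- exact: art_trans IH1 IH2.
- rewrite !catA -(catA _ v) -!(catA (p ++ u)).
  exact: art_cancel.
- rewrite !catA -!(catA (p ++ u)) -!(catA _ v).
  exact: art_rel.
Qed.

Lemma art_eq_cat (u u' v v' : word S) :
  art_eq M u u' -> art_eq M v v' -> art_eq M (u ++ v) (u' ++ v').
Proof.
move=> uu' vv'; apply: (art_trans (v := u' ++ v)).
  exact: (art_eq_ctx [::] v uu').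
by have := art_eq_ctx u' [::] vv'; rewrite !cats0.
Qed.

Lemma in_parabolic_cat (X : {set S}) (w1 w2 : word S) :
  in_parabolic M X w1 -> in_parabolic M X w2 -> in_parabolic M X (w1 ++ w2).
Proof.
case=> [v1 [w1v1 Xv1]] [v2 [w2v2 Xv2]]; exists (v1 ++ v2).
by split; [exact: art_eq_cat | rewrite all_cat Xv1 Xv2].
Qed.

Lemma in_parabolicS (X Y : {set S}) (w : word S) :
  X \subset Y -> in_parabolic M X w -> in_parabolic M Y w.
Proof.
move=> sXY [v [wv Xv]]; exists v; split=> //.
by apply/allP => a /(allP Xv) /(subsetP sXY).
Qed.

Lemma retraction_refl (Z : {set S}) : retraction M Z Z.
Proof. by exists id; split=> // *; exact: art_refl. Qed.

Lemma retraction_trans (Z Z' Y : {set S}) :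
  Y \subset Z' -> Z' \subset Z ->
  retraction M Z Z' -> retraction M Z' Y -> retraction M Z Y.
Proof.
move=> sYZ' sZ'Z [f [f_eq f_cat f_in f_id]] [g [g_eq g_cat g_in g_id]].
exists (g \o f); split=> /=.
- by move=> w1 w2 Zw1 Zw2 w12; apply: g_eq; auto.
- move=> w1 w2 Zw1 Zw2; apply: (art_trans (v := g (f w1 ++ f w2))).
    by apply: g_eq; [apply/f_in/in_parabolic_cat | apply: in_parabolic_cat | ]; auto.
  by apply: g_cat; auto.
- by move=> w Zw; auto.
- move=> w Yw; have Z'w := in_parabolicS sYZ' Yw.
  apply: (art_trans (v := g w)); last exact: g_id.
  by apply: g_eq; [apply/f_in/(in_parabolicS sZ'Z) | | apply: f_id].
Qed.

Lemma retraction_restrict (Z Z' Y : {set S}) :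
  Z' \subset Z -> retraction M Z Y -> retraction M Z' Y.
Proof.
move=> sZ'Z [f [f_eq f_cat f_in f_id]].
have Z'_Z w : in_parabolic M Z' w -> in_parabolic M Z w by exact: in_parabolicS.
by exists f; split=> [w1 w2 ? ? | w1 w2 ? ? | w ? | //]; auto.
Qed.

Hypothesis retraction_step :
  forall (X : {set S}) (x : S), x \in X -> retraction M X (X :\ x).

Lemma retraction_of_steps (Y Z : {set S}) : Y \subset Z -> retraction M Z Y.
Proof.
move: {2}#|Z :\: Y| (erefl #|Z :\: Y|) => n.
elim: n Z => [|n IH] Z cardZY sYZ.
  suff -> : Z = Y by exact: retraction_refl.
  by apply/eqP; rewrite eqEsubset sYZ andbT -setD_eq0 -cards_eq0 cardZY.
have [x xZY] : exists x, x \in Z :\: Y by apply/card_gt0P; rewrite cardZY.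
have [xZ xY] := setDP xZY.
have sYZx : Y \subset Z :\ x by rewrite subsetD1 sYZ xY.
apply: (retraction_trans sYZx (subsetDl _ _) (retraction_step xZ)).
apply: IH sYZx; apply/eqP; rewrite -eqSS -cardZY (cardsD1 x (Z :\: Y)) xZY.
by rewrite setDDl setUC -setDDl.
Qed.

End ParabolicRetractions.

Theorem lemma3p1 (S : finType) (M : S -> S -> option nat) :
  coxeter_matrix M ->
  (parabolic_retractable M <->
   forall (X : {set S}) (x : S), x \in X -> retraction M X (X :\ x)).
Proof.
move=> _; split=> [retractable X x xX | steps X].
- exact: retraction_restrict (subsetT X) (retractable (X :\ x)).
- exact: (retraction_of_steps steps (subsetT X)).
Qed.
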